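(* The set ${\operatorname{\mathsf{TPD}}}_{n}(\mathbb{S}_{\max}^\vee)$ is equal to the set \[ \{A=(a_{ij}) \in (\mathbb{S}_{\max}^{\vee})^{n \times n} : \mathbf{0} < a_{ii}\; \forall i \in [n],\; a_{ij}=a_{ji} \;\text{and}\; a_{ij}^{ 2} < a_{ii} a_{jj}\; \forall i,j \in [n], i \neq j\}\enspace . \]
   Context: $\mathbb{S}_{\max}$ is the symmetrized tropical semiring over a divisible totally ordered abelian group, with zero $\mathbf{0}$, unit $\mathbf{1}$, minus $\ominus$; $\mathbb{S}_{\max}^\vee$ is the set of signed elements (positive, negative or $\mathbf{0}$), $\mathbb{S}_{\max}^\oplus$ the set of positive elements together with $\mathbf{0}$. For $a,b\in\mathbb{S}_{\max}$, $a<b$ iff $b\ominus a\in\mathbb{S}_{\max}^\oplus\setminus\{\mathbf{0}\}$. ${\operatorname{\mathsf{TPD}}}_n(\mathbb{S}_{\max}^\vee)$ is the set of symmetric matrices $A\in(\mathbb{S}_{\max}^\vee)^{n\times n}$ such that $\mathbf{0}<x^TAx$ for all $x\in(\mathbb{S}_{\max}^\vee)^n\setminus\{\mathbf{0}\}$. *)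

From mathcomp Require Import all_boot all_algebra.
Set Implicit Arguments. Unset Strict Implicit. Unset Printing Implicit Defensive.
Import GRing.Theory.
Local Open Scope ring_scope.

(* The value group: an additive abelian group G (written additively; the
   tropical product is the group law) with a boolean relation [le] that is a
   translation-invariant total order, and G is divisible. *)
Definition divisible_tot_ordered_group (G : zmodType) (le : rel G) : Prop :=
  [/\ (forall a, le a a),
      (forall a b, le a b -> le b a -> a = b),
      (forall a b c, le a b -> le b c -> le a c) &
      (forall a b, le a b || le b a)] /\
  (forall a b c, le a b -> le (a + c) (b + c)) /\
  (forall (g : G) (k : nat), (0 < k)%N -> exists h : G, h *+ k = g).

(* Elements of the symmetrized tropical semiring S_max over G:
   zero, positive  g (= ⊕g), negative g (= ⊖g), balanced g (= g^•). *)
Inductive Smax (G : Type) : Type :=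
| SZero : Smax G
| SPos : G -> Smax G
| SNeg : G -> Smax G
| SBal : G -> Smax G.
Arguments SZero {G}.

Section SmaxOps.
Variables (G : zmodType) (le : rel G).

Definition smod (x : Smax G) : G :=
  match x with SZero => 0 | SPos g => g | SNeg g => g | SBal g => g end.

Definition sone : Smax G := SPos 0.

Definition sopp (x : Smax G) : Smax G :=
  match x with
  | SZero => SZero | SPos g => SNeg g | SNeg g => SPos g | SBal g => SBal g
  end.

Definition same_kind (x y : Smax G) : bool :=
  match x, y with
  | SPos _, SPos _ | SNeg _, SNeg _ | SBal _, SBal _ => true
  | _, _ => false
  end.

Definition sadd (x y : Smax G) : Smax G :=
  match x, y with
  | SZero, _ => y
  | _, SZero => x
  | _, _ =>
    let g := smod x in let h := smod y in
    if g == h then (if same_kind x y then x else SBal g)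
    else if le g h then y else x
  end.

Definition smul (x y : Smax G) : Smax G :=
  match x, y with
  | SZero, _ | _, SZero => SZero
  | SBal g, _ => SBal (g + smod y)
  | _, SBal h => SBal (smod x + h)
  | SPos g, SPos h | SNeg g, SNeg h => SPos (g + h)
  | SPos g, SNeg h | SNeg g, SPos h => SNeg (g + h)
  end.

Definition ssub (x y : Smax G) : Smax G := sadd x (sopp y).

(* S_max^vee : signed elements (positive, negative or zero) *)
Definition is_signed (x : Smax G) : bool :=
  match x with SBal _ => false | _ => true end.

Definition is_pos_nonzero (x : Smax G) : bool :=
  match x with SPos _ => true | _ => false end.

Definition slt (a b : Smax G) : bool := is_pos_nonzero (ssub b a).

Definition quad_form (n : nat) (A : 'M[Smax G]_n) (x : 'I_n -> Smax G)
  : Smax G :=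
  \big[sadd/SZero]_(i < n) \big[sadd/SZero]_(j < n)
     smul (smul (x i) (A i j)) (x j).

Definition TPD (n : nat) (A : 'M[Smax G]_n) : Prop :=
  (forall i j, is_signed (A i j)) /\
  (forall i j, A i j = A j i) /\
  (forall x : 'I_n -> Smax G,
     (forall i, is_signed (x i)) -> (exists i, x i <> SZero) ->
     slt SZero (quad_form A x)).

End SmaxOps.

(* Write |x| for the modulus of x.  If A satisfies the conditions and x is signed
   and nonzero, let i0 maximise the diagonal terms x_i a_ii x_i = ⊕(2|x_i| + |a_ii|),
   with value ⊕M.  Since 2|a_ij| < |a_ii| + |a_jj|, every off-diagonal term has
   modulus < M, so the tropical sum x^T A x is absorbed by its dominant terms and
   equals ⊕M.  Conversely, unit vectors give 0 < a_ii; and if a_ij^2 >= a_ii a_jj,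
   the vector with x_i = ⊕d, 2d = |a_jj| - |a_ii|, and x_j of modulus 0 and sign
   opposite to a_ij makes both diagonal terms ⊕|a_jj| and both cross terms
   ⊖(d + |a_ij|), which dominate: x^T A x is negative or balanced. *)

From mathcomp Require Import all_boot all_algebra.
Local Open Scope ring_scope.
Import GRing.Theory.

Section SymmetrizedMaxPlus.
Variables (G : zmodType) (le : rel G).
Hypotheses (lexx : forall a, le a a)
  (le_anti : forall {a b}, le a b -> le b a -> a = b)
  (le_trans : forall {a b c}, le a b -> le b c -> le a c)
  (le_total : forall a b, le a b || le b a)
  (leD2r : forall {a b} c, le a b -> le (a + c) (b + c)).

Lemma nle_ge {a b} : ~~ le a b -> le b a.
Proof. by move=> nab; move: (le_total a b); rewrite (negbTE nab). Qed.

Lemma leD {a b c d} : le a b -> le c d -> le (a + c) (b + d).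
Proof.
move=> le_ab le_cd; apply: le_trans (leD2r c le_ab) _.
by rewrite ![b + _]addrC; apply: leD2r.
Qed.

Lemma leD2r_cancel {a b c} : le (a + c) (b + c) -> le a b.
Proof. by move/(leD2r (- c)); rewrite !addrK. Qed.

Lemma le_double a b : le (a + a) (b + b) -> le a b.
Proof.
move=> le2; apply: contraT => nab; have le_ba := nle_ge nab.
have le_ab2 : le (a + b) (b + b) by apply: le_trans le2; rewrite addrC leD2r.
have e : a + b = b + b by apply: le_anti le_ab2 (leD2r b le_ba).
by rewrite (addIr _ e) lexx in nab.
Qed.

Lemma cross_term_nge {M u v a b g} :
  le (u + a + u) M -> le (v + b + v) M -> ~~ le (a + b) (g + g) ->
  ~~ le M (u + g + v).
Proof.
move=> le_uM le_vM; apply: contra => le_Mg.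
have e1 : (u + a + u) + (v + b + v) = (a + b) + ((u + u) + (v + v)).
  by rewrite [u + a + u]addrAC [v + b + v]addrAC addrACA addrC.
have e2 : (u + g + v) + (u + g + v) = (g + g) + ((u + u) + (v + v)).
  by rewrite [u + g]addrC addrACA [g + u + _]addrACA -addrA.
have := le_trans (leD le_uM le_vM) (leD le_Mg le_Mg).
by rewrite e1 e2; apply: leD2r_cancel.
Qed.

Lemma le_half_gap {a b d g} :
  d + d = b - a -> le (a + b) (g + g) -> le b (d + g).
Proof.
move=> dd le_abg; apply: le_double.
have -> : b + b = (a + b) + (d + d) by rewrite dd [RHS]addrC addrA subrK.
by rewrite [d + g + _]addrACA [d + d + _]addrC; apply: leD2r.
Qed.

Implicit Types x y : Smax G.

Lemma argmax_exists (I : eqType) (P : pred I) (w : I -> G) (s : seq I) :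
  has P s -> exists2 i0, P i0 & forall k, k \in s -> P k -> le (w k) (w i0).
Proof.
elim: s => //= a s IH hasP_as; have [/IH [i0 Pi0 max_i0]|no_s] := boolP (has P s).
  have [Pa|nPa] := boolP (P a); last first.
    by exists i0 => // k /predU1P [->|ks]; [rewrite (negbTE nPa)|apply: max_i0].
  have [le_ai0|/nle_ge le_i0a] := boolP (le (w a) (w i0)).
    by exists i0 => // k /predU1P [->|ks]; [|apply: max_i0].
  exists a => // k /predU1P [-> _|ks Pk]; first exact: lexx.
  exact: le_trans (max_i0 k ks Pk) le_i0a.
have Pa : P a by move: hasP_as; rewrite (negbTE no_s) orbF.
exists a => // k /predU1P [-> _|ks Pk]; first exact: lexx.
by case/hasP: no_s; exists k.
Qed.

Lemma smulx0 x : smul x (@SZero G) = SZero.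
Proof. by case: x. Qed.

Lemma smul1x x : smul (sone G) x = x.
Proof. by case: x => //= g; rewrite add0r. Qed.

Lemma smulx1 x : smul x (sone G) = x.
Proof. by case: x => //= g; rewrite addr0. Qed.

Definition is_nonzero x : bool := if x is SZero then false else true.

Lemma not_nonzero x : ~~ is_nonzero x -> x = SZero.
Proof. by case: x. Qed.

Lemma smod_smul x y :
  is_nonzero x -> is_nonzero y -> smod (smul x y) = smod x + smod y.
Proof. by case: x => // g _; case: y. Qed.

Lemma smul_nonzero x y : is_nonzero x -> is_nonzero y -> is_nonzero (smul x y).
Proof. by case: x => // g _; case: y. Qed.

Lemma smul_signed_sq x :
  is_signed x -> is_nonzero x -> smul x x = SPos (smod x + smod x).
Proof. by case: x. Qed.

Lemma smul_signed_diag x a : is_signed x -> is_nonzero x ->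
  smul (smul x (SPos a)) x = SPos (smod x + a + smod x).
Proof. by case: x. Qed.

Lemma saddx0 x : sadd le x SZero = x.
Proof. by case: x. Qed.

Lemma saddxx x : sadd le x x = x.
Proof. by case: x => //= g; rewrite eqxx. Qed.

Lemma slt0x x : slt le SZero x = is_pos_nonzero x.
Proof. by case: x. Qed.

Lemma slt0_SPos x : slt le SZero x -> x = SPos (smod x).
Proof. by case: x. Qed.

Lemma slt_SPos p q : slt le (SPos p) (SPos q) = (q != p) && ~~ le q p.
Proof. by rewrite /slt /ssub /=; case: eqP => //= _; case: (le q p). Qed.

Definition capped (c : G) (s : Smax G) : Prop := s = SZero \/ le (smod s) c.

Definition capped_pos (M : G) (s : Smax G) : Prop :=
  [\/ s = SZero, s = SPos M | ~~ le M (smod s)].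

Definition neg_or_bal (c : G) (s : Smax G) : Prop := s = SNeg c \/ s = SBal c.

Lemma sadd_capped c x y : capped c x -> capped c y -> capped c (sadd le x y).
Proof.
move=> [->//|le_xc] [->|le_yc]; first by rewrite saddx0; right.
right; case: x le_xc => [|g|g|g] le_gc; case: y le_yc => [|h|h|h] le_hc //=.
all: by repeat case: ifP.
Qed.

Lemma sadd_neg_or_bal c x y : neg_or_bal c x -> capped c y ->
  neg_or_bal c (sadd le x y) /\ neg_or_bal c (sadd le y x).
Proof.
move=> Tx [->|]; first by rewrite saddx0.
case: y => [|h|h|h] /= le_hc; first by rewrite saddx0.
all: have [->|ne_hc] := eqVneq h c;
  first by case: Tx => ->; rewrite /= eqxx /=; split; (by left) || right.
all: have nle_ch : le c h = false by
  apply/negbTE/negP => le_ch; rewrite (le_anti le_hc le_ch) eqxx in ne_hc.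
all: by case: Tx => ->; rewrite /= [c == h]eq_sym (negbTE ne_hc) nle_ch le_hc;
  split; (by left) || right.
Qed.

Lemma capped_pos_SPos M m : le m M -> capped_pos M (SPos m).
Proof.
have [->|ne_mM] := eqVneq m M; first by constructor 2.
move=> le_mM; constructor 3.
by apply: contra ne_mM => le_Mm; rewrite (le_anti le_mM le_Mm).
Qed.

Lemma SPos_sadd_capped_pos {M y} : capped_pos M y ->
  sadd le (SPos M) y = SPos M /\ sadd le y (SPos M) = SPos M.
Proof.
case=> [->|->|nle_My]; rewrite ?saddx0 ?saddxx //.
have ne_yM : smod y != M by apply: contraNneq nle_My => ->.
have le_yM := nle_ge nle_My.
case: y nle_My ne_yM le_yM => [|h|h|h] //= nle_Mh ne_hM le_hM.
all: by rewrite eq_sym (negbTE ne_hM) (negbTE nle_Mh) le_hM.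
Qed.

Lemma sadd_capped_pos M x y :
  capped_pos M x -> capped_pos M y -> capped_pos M (sadd le x y).
Proof.
move=> Cx Cy; case: (Cx) => [->//|->|nle_Mx].
  by rewrite (proj1 (SPos_sadd_capped_pos Cy)); constructor 2.
case: Cy => [->|->|nle_My]; first by rewrite saddx0; constructor 3.
  by rewrite (proj2 (SPos_sadd_capped_pos Cx)); constructor 2.
constructor 3; clear Cx.
case: x nle_Mx => [|g|g|g] nle_Mg; case: y nle_My => [|h|h|h] nle_Mh //=.
all: by repeat case: ifP.
Qed.

Section AbsorbingSums.
Variables (S T : Smax G -> Prop).
Hypotheses (S0 : S SZero) (S_sadd : forall x y, S x -> S y -> S (sadd le x y))
  (T_sadd : forall {x y}, T x -> S y -> T (sadd le x y) /\ T (sadd le y x)).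

Lemma big_sadd_closed (I : eqType) (r : seq I) (F : I -> Smax G) :
  (forall i, i \in r -> S (F i)) -> S (\big[sadd le/SZero]_(i <- r) F i).
Proof. by move=> SF; rewrite big_seq; apply: big_ind. Qed.

Lemma big_sadd_absorbing (I : eqType) (r : seq I) (F : I -> Smax G) i0 :
  (forall i, i \in r -> S (F i)) -> i0 \in r -> T (F i0) ->
  T (\big[sadd le/SZero]_(i <- r) F i).
Proof.
elim: r => // a r IH SF; rewrite big_cons in_cons => /predU1P [<-|i0r] Ti0.
  apply: (T_sadd Ti0 _).1; apply: big_sadd_closed => i ir.
  by apply: SF; rewrite in_cons ir orbT.
apply: (T_sadd _ (SF a (mem_head a r))).2.
by apply: IH i0r Ti0 => i ir; apply: SF; rewrite in_cons ir orbT.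
Qed.

Lemma quad_form_absorbing n (A : 'M[Smax G]_n) (x : 'I_n -> Smax G) i j :
  (forall k l, S (smul (smul (x k) (A k l)) (x l))) ->
  T (smul (smul (x i) (A i j)) (x j)) -> T (quad_form le A x).
Proof.
move=> S_term T_ij; apply: (@big_sadd_absorbing _ _ _ i).
- by move=> k _; apply: big_sadd_closed.
- exact: mem_index_enum.
- exact: big_sadd_absorbing (mem_index_enum j) T_ij.
Qed.

End AbsorbingSums.

Lemma quad_form_single n (A : 'M[Smax G]_n) (x : 'I_n -> Smax G) i :
  (forall k : 'I_n, k != i -> x k = SZero) ->
  quad_form le A x = smul (smul (x i) (A i i)) (x i).
Proof.
move=> x_out; set v := smul _ _.
apply: (@quad_form_absorbing (fun s => s = SZero \/ s = v) (eq^~ v) _ _ _ n A x i i).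
- by left.
- by move=> a b [->|->] [->|->]; rewrite ?saddx0 ?saddxx; [left|right|right|right].
- by move=> a b -> [->|->]; rewrite ?saddx0 ?saddxx.
- move=> k l; have [->|/x_out->] := eqVneq k i; last by left.
  by have [->|/x_out->] := eqVneq l i; [right|left; rewrite smulx0].
- by [].
Qed.

Lemma quad_form_SPos n (A : 'M[Smax G]_n) (x : 'I_n -> Smax G) M i j :
  (forall k l, capped_pos M (smul (smul (x k) (A k l)) (x l))) ->
  smul (smul (x i) (A i j)) (x j) = SPos M -> quad_form le A x = SPos M.
Proof.
apply: (@quad_form_absorbing (capped_pos M) (eq^~ (SPos M))).
- by constructor 1.
- exact: sadd_capped_pos.
- by move=> a b -> Cb; apply: SPos_sadd_capped_pos.
Qed.

Lemma quad_form_not_pos n (A : 'M[Smax G]_n) (x : 'I_n -> Smax G) c i j :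
  (forall k l, capped c (smul (smul (x k) (A k l)) (x l))) ->
  smul (smul (x i) (A i j)) (x j) = SNeg c -> ~~ slt le SZero (quad_form le A x).
Proof.
move=> C_term T_ij; have : neg_or_bal c (quad_form le A x).
  apply: (@quad_form_absorbing (capped c) (neg_or_bal c) _ _ _ n A x i j C_term).
  - by left.
  - exact: sadd_capped.
  - by move=> a b; apply: sadd_neg_or_bal.
  - by left.
by case=> ->.
Qed.

Section DominantDiagonal.
Variables (n : nat) (A : 'M[Smax G]_n).
Hypotheses (A_signed : forall i j, is_signed (A i j))
  (A_diag : forall i, slt le SZero (A i i))
  (A_offdiag : forall {i j}, i != j -> A i j = A j i /\
     slt le (smul (A i j) (A i j)) (smul (A i i) (A j j))).

Lemma diag_term (x : 'I_n -> Smax G) k : is_signed (x k) -> is_nonzero (x k) ->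
  smul (smul (x k) (A k k)) (x k) = SPos (smod (x k) + smod (A k k) + smod (x k)).
Proof.
by move=> x_signed x_nz; rewrite [A k k]slt0_SPos ?smul_signed_diag.
Qed.

Lemma offdiag_dominated {i j} : i != j -> is_nonzero (A i j) ->
  ~~ le (smod (A i i) + smod (A j j)) (smod (A i j) + smod (A i j)).
Proof.
move=> ne_ij nz_ij; have [_] := A_offdiag ne_ij.
rewrite [A i i]slt0_SPos // [A j j]slt0_SPos //.
by rewrite smul_signed_sq // slt_SPos => /andP [].
Qed.

Lemma quad_form_dominant_pos (x : 'I_n -> Smax G) :
  (forall i, is_signed (x i)) -> (exists i, x i <> SZero) ->
  slt le SZero (quad_form le A x).
Proof.
move=> x_signed [k0 x_k0].
pose w k := smod (x k) + smod (A k k) + smod (x k).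
have [i0 nz_i0 max_i0] : exists2 i0, is_nonzero (x i0) &
    forall k, k \in index_enum 'I_n -> is_nonzero (x k) -> le (w k) (w i0).
  apply: argmax_exists; apply/hasP; exists k0; first exact: mem_index_enum.
  by case: (x k0) x_k0.
have max_w k : is_nonzero (x k) -> le (w k) (w i0) := max_i0 k (mem_index_enum k).
rewrite slt0x (@quad_form_SPos _ _ _ (w i0) i0 i0) ?diag_term //.
move=> k l; have [nz_k|/not_nonzero ->] := boolP (is_nonzero (x k)).
  2: by constructor 1.
have [nz_l|/not_nonzero ->] := boolP (is_nonzero (x l)).
  have [<-|ne_kl] := eqVneq k l.
    by rewrite diag_term //; apply/capped_pos_SPos/max_w.
  have [nz_kl|/not_nonzero ->] := boolP (is_nonzero (A k l)); last first.
    by rewrite smulx0; constructor 1.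
  constructor 3; rewrite !smod_smul ?smul_nonzero //.
  exact: cross_term_nge (max_w k nz_k) (max_w l nz_l) (offdiag_dominated ne_kl nz_kl).
by rewrite smulx0; constructor 1.
Qed.

Lemma TPD_of_dominant_diagonal : TPD le A.
Proof.
split=> //; split; last exact: quad_form_dominant_pos.
by move=> i j; have [->|/A_offdiag []] := eqVneq i j.
Qed.

End DominantDiagonal.

Lemma quad_form_pair_not_pos n (A : 'M[Smax G]_n) (x : 'I_n -> Smax G) c i j :
  (forall k : 'I_n, k != i -> k != j -> x k = SZero) ->
  capped c (smul (smul (x i) (A i i)) (x i)) ->
  capped c (smul (smul (x j) (A j j)) (x j)) ->
  capped c (smul (smul (x j) (A j i)) (x i)) ->
  smul (smul (x i) (A i j)) (x j) = SNeg c -> ~~ slt le SZero (quad_form le A x).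
Proof.
move=> x_out C_ii C_jj C_ji T_ij; apply: (@quad_form_not_pos _ _ _ _ i j _ T_ij) => k l.
have [->|ne_ki] := eqVneq k i; last have [->|ne_kj] := eqVneq k j; last first.
  by rewrite x_out //; left.
all: have [->|ne_li] := eqVneq l i; last have [->|ne_lj] := eqVneq l j;
  last by rewrite (x_out l) // smulx0; left.
all: by rewrite ?T_ij //; right; apply: lexx.
Qed.

Lemma TPD_diag_pos n (A : 'M[Smax G]_n) i : TPD le A -> slt le SZero (A i i).
Proof.
case=> _ [_ A_pos]; pose e (k : 'I_n) := if k == i then sone G else SZero.
have e_out (k : 'I_n) : k != i -> e k = SZero by rewrite /e => /negbTE ->.
have := A_pos e _ _; rewrite (@quad_form_single _ A e i e_out) /e eqxx smul1x smulx1.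
apply.
- by move=> k; case: ifP.
- by exists i; rewrite eqxx.
Qed.

Lemma TPD_offdiag_lt (halve : forall g : G, exists h, h + h = g)
    n (A : 'M[Smax G]_n) i j : TPD le A -> i != j ->
  slt le (smul (A i j) (A i j)) (smul (A i i) (A j j)).
Proof.
move=> tpdA ne_ij; have [A_signed [A_sym A_pos]] := tpdA.
have diagE k : A k k = SPos (smod (A k k)) by apply/slt0_SPos/TPD_diag_pos.
rewrite (diagE i) (diagE j); set a := smod (A i i); set b := smod (A j j).
have [nz_ij|/not_nonzero ->] := boolP (is_nonzero (A i j)); last by rewrite slt0x.
rewrite smul_signed_sq // slt_SPos; set g := smod (A i j).
suff nle_abg : ~~ le (a + b) (g + g).
  by rewrite nle_abg andbT; apply: contraNneq nle_abg => ->.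
apply/negP => le_abg; have [d dd] := halve (b - a).
pose t : Smax G := if A i j is SPos _ then SNeg 0 else SPos 0.
pose x (k : 'I_n) := if k == i then SPos d else if k == j then t else SZero.
have ne_ji : (j == i) = false by rewrite eq_sym (negbTE ne_ij).
have le_bc := le_half_gap dd le_abg.
have x_signed k : is_signed (x k).
  by rewrite /x /t; case: ifP => // _; case: ifP => //; case: (A i j).
have x_nz : exists k, x k <> SZero by exists i; rewrite /x eqxx.
move: (A_pos x x_signed x_nz); apply/negP.
apply: (@quad_form_pair_not_pos _ _ _ (d + g) i j).
- by move=> k /negbTE ki /negbTE kj; rewrite /x ki kj.
- by rewrite /x eqxx (diagE i) /= addrAC dd subrK; right.
- rewrite /x ne_ji eqxx /t (diagE j); right.
  by case: (A i j) => //=; rewrite add0r addr0.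
- rewrite /x ne_ji !eqxx -A_sym /t /g; right.
  by case: (A i j) (A_signed i j) nz_ij => //= h _ _; rewrite add0r addrC lexx.
- rewrite /x ne_ji !eqxx /t /g.
  by case: (A i j) (A_signed i j) nz_ij => //= h _ _; rewrite addr0.
Qed.

End SymmetrizedMaxPlus.

Theorem theorem4p3 (G : zmodType) (le : rel G)
    (HG : divisible_tot_ordered_group le) (n : nat) (A : 'M[Smax G]_n) :
  TPD le A <->
  ((forall i j, is_signed (A i j)) /\
   (forall i, slt le SZero (A i i)) /\
   (forall i j, i != j ->
      A i j = A j i /\
      slt le (smul (A i j) (A i j)) (smul (A i i) (A j j)))).
Proof.
case: HG => [[lexx le_anti le_trans le_total] [leD2r divisible]].
have halve (g : G) : exists h, h + h = g.
  by have [h <-] := divisible g 2 isT; exists h; rewrite mulr2n.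
split=> [tpdA | [A_signed [A_diag A_offdiag]]]; last first.
  exact: TPD_of_dominant_diagonal.
have [A_signed [A_sym _]] := tpdA.
split=> //; split=> [i|i j ne_ij]; first exact: TPD_diag_pos.
by split; [apply: A_sym | apply: TPD_offdiag_lt].
Qed.
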